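(* Let $x=(x_n)_{n\in\mathbb{Z}}$ be an integer-valued sequence. For every $i\in\mathbb{Z}$, the set of descendants of $R_x(i)$ in the record graph of $x$ contains $\{j\in\mathbb{Z}: i\le j\le R_x(i)\}$.
   Context: The record map is $R_x(i)=\inf\{n>i: \sum_{l=i}^{n-1}x_l\ge0\}$ if this set is nonempty, and $R_x(i)=i$ otherwise; the record graph has vertex set $\mathbb{Z}$ and directed edges $i\to R_x(i)$ for $R_x(i)\neq i$. The set of descendants of $v$ is $D(v)=\{v\}\cup\{j\ne v: R_x^n(j)=v\text{ for some }n\ge1\}$. *)

From Stdlib Require Import ZArith Lia ClassicalEpsilon.
Open Scope Z_scope.

(* psum x i n = sum_{l=i}^{n-1} x l  (for n > i; 0 if n <= i) *)
Definition psum (x : Z -> Z) (i n : Z) : Z :=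
  List.fold_right Z.add 0
    (List.map (fun k : nat => x (i + Z.of_nat k)) (List.seq 0 (Z.to_nat (n - i)))).

Definition is_record_value (x : Z -> Z) (i r : Z) : Prop :=
  (i < r /\ 0 <= psum x i r /\ (forall n, i < n < r -> psum x i n < 0))
  \/ ((forall n, i < n -> psum x i n < 0) /\ r = i).

Lemma record_value_exists (x : Z -> Z) (i : Z) : exists r, is_record_value x i r.
Proof.
  destruct (classic (exists n, i < n /\ 0 <= psum x i n)) as [[n [Hn Hs]]|H].
  -
    assert (Hgen : forall k : nat, forall m, m = i + Z.of_nat k -> i < m ->
              0 <= psum x i m -> exists r, is_record_value x i r).
    { intro k. induction k as [k IH] using (well_founded_induction lt_wf).
      intros m Hm Him Hsm.
      destruct (classic (exists n', i < n' < m /\ 0 <= psum x i n')) as [[n' [Hn' Hs']]|Hno].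
      + apply (IH (Z.to_nat (n' - i))) with (m := n'); try lia; auto.
      + exists m. left. split; [lia|split; [assumption|]].
        intros n' Hn'. destruct (Z_lt_le_dec (psum x i n') 0) as [h|h]; auto.
        exfalso. apply Hno. exists n'. auto. }
    apply (Hgen (Z.to_nat (n - i)) n); lia || auto.
  - exists i. right. split; [|reflexivity].
    intros n Hn. destruct (Z_lt_le_dec (psum x i n) 0) as [h|h]; auto.
    exfalso. apply H. exists n. auto.
Qed.

Definition R (x : Z -> Z) (i : Z) : Z :=
  proj1_sig (constructive_indefinite_description _ (record_value_exists x i)).

Lemma R_spec (x : Z -> Z) (i : Z) : is_record_value x i (R x i).
Proof. unfold R. exact (proj2_sig (constructive_indefinite_description _ _)). Qed.

Fixpoint Riter (x : Z -> Z) (n : nat) (j : Z) : Z :=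
  match n with O => j | S n' => R x (Riter x n' j) end.

Definition descendants (x : Z -> Z) (v : Z) : Z -> Prop :=
  fun j => j = v \/ (j <> v /\ exists n : nat, (1 <= n)%nat /\ Riter x n j = v).

(* For i <= j < r := R x i, the sum of x over [j, r) is the sum over [i, r),
   which is nonnegative, minus the sum over [i, j), which is negative (or empty)
   by minimality of r.  Hence j < R x j <= r: iterating R from j climbs strictly
   inside (j, r] and must therefore reach r. *)

From Stdlib Require Import ZArith Lia List.
Open Scope Z_scope.

Lemma psum_empty (x : Z -> Z) (i n : Z) : n <= i -> psum x i n = 0.
Proof.
  intros Hni. unfold psum.
  replace (Z.to_nat (n - i)) with 0%nat by lia. reflexivity.
Qed.

Lemma psum_cons (x : Z -> Z) (i n : Z) : i < n -> psum x i n = x i + psum x (i + 1) n.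
Proof.
  intros Hin. unfold psum.
  replace (Z.to_nat (n - i)) with (S (Z.to_nat (n - (i + 1)))) by lia.
  simpl. rewrite <- seq_shift, map_map.
  f_equal; [f_equal; lia|].
  f_equal. apply map_ext. intros k. f_equal. lia.
Qed.

Lemma psum_split (x : Z -> Z) (i j n : Z) :
  i <= j <= n -> psum x i n = psum x i j + psum x j n.
Proof.
  intros [Hij Hjn]. revert i Hij.
  apply (Z.strong_left_induction _ j).
  intros i Hij IH.
  destruct (Z.eq_dec i j) as [->|Hne].
  - rewrite (psum_empty x j j) by lia. reflexivity.
  - rewrite (psum_cons x i n), (psum_cons x i j) by lia.
    rewrite (IH (i + 1)) by lia. ring.
Qed.

Lemma R_gt_le_of_psum_nonneg (x : Z -> Z) (j n : Z) :
  j < n -> 0 <= psum x j n -> j < R x j <= n.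
Proof.
  intros Hjn Hsum.
  destruct (R_spec x j) as [[Hgt [_ Hmin]]|[Hnone _]].
  - split; [exact Hgt|].
    destruct (Z_le_gt_dec (R x j) n) as [Hle|Hgt']; [exact Hle|].
    specialize (Hmin n ltac:(lia)). lia.
  - specialize (Hnone n Hjn). lia.
Qed.

Lemma R_maps_into_record_interval (x : Z -> Z) (i j : Z) :
  i < R x i -> i <= j < R x i -> j < R x j <= R x i.
Proof.
  intros Hrec Hj. apply R_gt_le_of_psum_nonneg; [lia|].
  destruct (R_spec x i) as [[_ [Hsum Hmin]]|[_ Hri]]; [|lia].
  rewrite (psum_split x i j (R x i)) in Hsum by lia.
  destruct (Z.eq_dec i j) as [<-|Hne].
  - rewrite psum_empty in Hsum by lia. lia.
  - specialize (Hmin j ltac:(lia)). lia.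
Qed.

Lemma Riter_Sr (x : Z -> Z) (n : nat) (j : Z) : Riter x (S n) j = Riter x n (R x j).
Proof.
  induction n as [|n IH]; [reflexivity|].
  change (R x (Riter x (S n) j) = R x (Riter x n (R x j))). now rewrite IH.
Qed.

Lemma Riter_reaches_bound (x : Z -> Z) (a r : Z) :
  (forall j, a <= j < r -> j < R x j <= r) ->
  forall j, a <= j < r -> exists n : nat, (1 <= n)%nat /\ Riter x n j = r.
Proof.
  intros Hstep j Hj.
  assert (Hjr : j <= r) by lia. revert j Hjr Hj.
  apply (Z.strong_left_induction
           (fun j => a <= j < r -> exists n : nat, (1 <= n)%nat /\ Riter x n j = r) r).
  intros j _ IH Hj.
  destruct (Hstep j Hj) as [Hup Hle].
  destruct (Z.eq_dec (R x j) r) as [Hhit|Hne].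
  - exists 1%nat. split; [lia|exact Hhit].
  - destruct (IH (R x j) ltac:(lia) ltac:(lia) ltac:(lia)) as [n [_ Hn]].
    exists (S n). split; [lia|]. now rewrite Riter_Sr.
Qed.

Theorem lemma2p17 (x : Z -> Z) (i : Z) :
  forall j : Z, i <= j <= R x i -> descendants x (R x i) j.
Proof.
  intros j Hj.
  destruct (Z.eq_dec j (R x i)) as [Heq|Hne]; [left; exact Heq|].
  right. split; [exact Hne|].
  assert (Hrec : i < R x i) by lia.
  apply (Riter_reaches_bound x i (R x i)); [|lia].
  intros k Hk. exact (R_maps_into_record_interval x i k Hrec Hk).
Qed.
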